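(* Let $\tau$ be a $T_1$-topology on the bicyclic monoid $\mathcal{C}(p,q)$ such that $(\mathcal{C}(p,q),\tau)$ is a semitopological semigroup (i.e. the semigroup operation is separately continuous) and the topological space $(\mathcal{C}(p,q),\tau)$ is a Baire space. Then $\tau$ is the discrete topology.
   Context: The bicyclic monoid $\mathcal{C}(p,q)$ is the monoid with identity $1$ generated by two elements $p,q$ subject only to $pq=1$. Every element has a unique form $q^ip^j$ with $i,j\in\omega=\{0,1,2,\dots\}$, and multiplication is $q^kp^l\cdot q^mp^n = q^{k-l+m}p^n$ if $l<m$, $=q^kp^n$ if $l=m$, $=q^kp^{l-m+n}$ if $l>m$. A topological space $X$ is Baire if for every sequence $A_1,A_2,\dots$ of dense open subsets of $X$ the intersection $\bigcap_{i=1}^\infty A_i$ is dense in $X$. *)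

From Stdlib Require Import Arith.

(** The bicyclic monoid C(p,q): the element q^i p^j is encoded as the pair (i,j). *)
Definition bicyclic : Type := (nat * nat)%type.

(** q^k p^l * q^m p^n = q^(k-l+m) p^n if l<m, q^k p^n if l=m, q^k p^(l-m+n) if l>m. *)
Definition bmul (a b : bicyclic) : bicyclic :=
  let (k, l) := a in
  let (m, n) := b in
  if l <? m then (k + (m - l), n)
  else if l =? m then (k, n)
  else (k, (l - m) + n).

Definition bone : bicyclic := (0, 0).
Definition bp : bicyclic := (0, 1).
Definition bq : bicyclic := (1, 0).

Definition is_topology (O : (bicyclic -> Prop) -> Prop) : Prop :=
  O (fun _ => True) /\
  O (fun _ => False) /\
  (forall U V, O U -> O V -> O (fun x => U x /\ V x)) /\
  (forall F : (bicyclic -> Prop) -> Prop,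
      (forall U, F U -> O U) -> O (fun x => exists U, F U /\ U x)).

Definition T1 (O : (bicyclic -> Prop) -> Prop) : Prop :=
  forall x y : bicyclic, x <> y -> exists U, O U /\ U x /\ ~ U y.

Definition semitopological (O : (bicyclic -> Prop) -> Prop) : Prop :=
  forall a : bicyclic, forall U, O U ->
    O (fun x => U (bmul a x)) /\ O (fun x => U (bmul x a)).

Definition dense (O : (bicyclic -> Prop) -> Prop) (A : bicyclic -> Prop) : Prop :=
  forall V, O V -> (exists x, V x) -> exists x, V x /\ A x.

Definition baire (O : (bicyclic -> Prop) -> Prop) : Prop :=
  forall A : nat -> (bicyclic -> Prop),
    (forall n, O (A n) /\ dense O (A n)) -> dense O (fun x => forall n, A n x).

Definition discrete (O : (bicyclic -> Prop) -> Prop) : Prop :=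
  forall U : bicyclic -> Prop, O U.

(** A countable T1 Baire space has an isolated point: otherwise the complements
    of the points are dense open sets, indexed by the naturals, with empty
    intersection.  Separate continuity transports isolatedness along the
    translations of the bicyclic monoid: if q^i p^j is isolated then so is 1,
    since z |-> q^i z p^j is injective; and if 1 is isolated then so is every
    q^k p^l, since the preimage of 1 under z |-> p^k z q^l is a finite open
    neighbourhood of q^k p^l, and finite sets are closed in a T1 space. *)

From Stdlib Require Import Arith Lia List Cantor.
From Stdlib Require Import Classical FunctionalExtensionality PropExtensionality.

Lemma bmul_q_p_translate i j m n : bmul (i, 0) (bmul (m, n) (0, j)) = (i + m, n + j).
Proof.
  unfold bmul.
  repeat first [case Nat.ltb_spec | case Nat.eqb_spec]; intros; f_equal; lia.
Qed.

Lemma bmul_p_q_translate_self k l : bmul (0, k) (bmul (k, l) (l, 0)) = bone.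
Proof.
  unfold bmul, bone.
  repeat first [case Nat.ltb_spec | case Nat.eqb_spec]; intros; f_equal; lia.
Qed.

Lemma bmul_p_q_translate_eq_one k l m n :
  bmul (0, k) (bmul (m, n) (l, 0)) = bone -> m <= k /\ n <= l.
Proof.
  unfold bmul, bone.
  repeat first [case Nat.ltb_spec | case Nat.eqb_spec]; intros;
    try match goal with E : (_, _) = (_, _) |- _ => injection E end; lia.
Qed.

Section BicyclicTopology.

Variable O : (bicyclic -> Prop) -> Prop.

Definition isolated (x : bicyclic) : Prop := O (fun z => z = x).

Lemma open_ext (U V : bicyclic -> Prop) : O U -> (forall x, U x <-> V x) -> O V.
Proof.
  intros OU UV.
  replace V with U; [exact OU|].
  apply functional_extensionality; intro x; apply propositional_extensionality, UV.
Qed.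

Lemma isolatedI (V : bicyclic -> Prop) x :
  O V -> V x -> (forall z, V z -> z = x) -> isolated x.
Proof.
  intros OV Vx Vsub; apply (open_ext V); [exact OV|].
  intro z; split; [apply Vsub | now intros ->].
Qed.

Hypothesis O_topology : is_topology O.

Lemma discrete_of_isolated : (forall x, isolated x) -> discrete O.
Proof.
  intros Hiso U.
  destruct O_topology as (_ & _ & _ & O_union).
  apply (open_ext (fun x => exists V, (exists y, U y /\ V = (fun z => z = y)) /\ V x)).
  - apply O_union; intros V [y [_ ->]]; apply Hiso.
  - intro x; split.
    + now intros [V [[y [Uy ->]] ->]].
    + intro Ux; now exists (fun z => z = x); split; [exists x|].
Qed.

Section T1Space.

Hypothesis O_T1 : T1 O.

Lemma open_compl_point x : O (fun z => z <> x).
Proof.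
  destruct O_topology as (_ & _ & _ & O_union).
  apply (open_ext (fun z => exists U, (O U /\ ~ U x) /\ U z)).
  - now apply O_union; intros U [OU _].
  - intro z; split.
    + intros [U [[_ Ux] Uz]] ->; contradiction.
    + intro zx; destruct (O_T1 z x zx) as [U [OU [Uz Ux]]]; now exists U.
Qed.

Lemma dense_compl_point x : ~ isolated x -> dense O (fun z => z <> x).
Proof.
  intros Hx V OV [v Vv]; apply NNPP; intro Hno.
  apply Hx, (isolatedI V); [exact OV| |].
  - destruct (classic (v = x)) as [<-|vx]; [exact Vv|].
    exfalso; apply Hno; now exists v.
  - intros z Vz; apply NNPP; intro zx; apply Hno; now exists z.
Qed.

Lemma exists_isolated : baire O -> exists x, isolated x.
Proof.
  intro HB; apply NNPP; intro Hno.
  set (A n := fun z => z <> of_nat n).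
  assert (HA : forall n, O (A n) /\ dense O (A n)).
  { intro n; split; [apply open_compl_point|].
    apply dense_compl_point; intro Hn; apply Hno; now exists (of_nat n). }
  destruct O_topology as (O_full & _).
  destruct (HB A HA (fun _ => True) O_full (ex_intro _ bone I)) as [x [_ Hx]].
  exact (Hx (to_nat x) (eq_sym (cancel_of_to x))).
Qed.

Lemma open_avoiding_list x (L : list bicyclic) :
  exists W, O W /\ W x /\ forall z, In z L -> z <> x -> ~ W z.
Proof.
  destruct O_topology as (O_full & _ & O_inter & _).
  induction L as [|a L [W [OW [Wx Wsep]]]].
  - now exists (fun _ => True).
  - destruct (classic (a = x)) as [->|ax].
    + exists W; split; [exact OW|split; [exact Wx|]].
      intros z [<-|Lz] zx; [contradiction|now apply Wsep].
    + destruct (O_T1 x a (fun e => ax (eq_sym e))) as [U [OU [Ux Ua]]].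
      exists (fun z => U z /\ W z); split; [now apply O_inter|split; [easy|]].
      intros z [<-|Lz] zx [Uz Wz]; [contradiction|now apply (Wsep z)].
Qed.

Lemma isolated_of_finite_nbhd (U : bicyclic -> Prop) (L : list bicyclic) x :
  O U -> U x -> (forall z, U z -> In z L) -> isolated x.
Proof.
  intros OU Ux UL.
  destruct (open_avoiding_list x L) as [W [OW [Wx Wsep]]].
  destruct O_topology as (_ & _ & O_inter & _).
  apply (isolatedI (fun z => U z /\ W z)); [now apply O_inter|easy|].
  intros z [Uz Wz]; apply NNPP; intro zx; exact (Wsep z (UL z Uz) zx Wz).
Qed.

End T1Space.

Section Semitopological.

Hypothesis O_semitop : semitopological O.

Lemma open_preimage_translate (a b : bicyclic) (U : bicyclic -> Prop) :
  O U -> O (fun z => U (bmul a (bmul z b))).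
Proof.
  intro OU; exact (proj2 (O_semitop b _ (proj1 (O_semitop a U OU)))).
Qed.

Lemma isolated_bone x : isolated x -> isolated bone.
Proof.
  destruct x as [i j]; intro Hx.
  apply (isolatedI _ bone (open_preimage_translate (i, 0) (0, j) _ Hx)).
  - cbv beta; unfold bone; rewrite bmul_q_p_translate; f_equal; lia.
  - intros [m n]; cbv beta; rewrite bmul_q_p_translate; intro E; injection E.
    unfold bone; intros; f_equal; lia.
Qed.

Lemma isolated_of_isolated_bone : T1 O -> isolated bone -> forall x, isolated x.
Proof.
  intros O_T1 Hone [k l].
  apply (isolated_of_finite_nbhd O_T1 _ (list_prod (seq 0 (S k)) (seq 0 (S l))) _
           (open_preimage_translate (0, k) (l, 0) _ Hone)).
  - apply bmul_p_q_translate_self.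
  - intros [m n] E; apply bmul_p_q_translate_eq_one in E.
    apply in_prod; apply in_seq; lia.
Qed.

End Semitopological.

End BicyclicTopology.

Theorem theorem1 (O : (bicyclic -> Prop) -> Prop) :
  is_topology O -> T1 O -> semitopological O -> baire O -> discrete O.
Proof.
  intros O_topology O_T1 O_semitop O_baire.
  destruct (exists_isolated O O_topology O_T1 O_baire) as [x Hx].
  apply (discrete_of_isolated O O_topology).
  apply (isolated_of_isolated_bone O O_topology O_semitop O_T1).
  exact (isolated_bone O O_semitop x Hx).
Qed.
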